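(* Let $p$ be an odd prime, $k$ algebraically closed of characteristic $p$, $d=p^2+1$, and let $X$ be the Artin–Schreier curve $y^p-y=-x^{d}-x^{d/2+p}$ over $k$. For every $\alpha=y^mx^ndx\in\mathcal B_X$ with $m\ge\frac{p-1}{2}$, we have $\mathcal C_X(\alpha)\notin\operatorname{Span}(\mathcal C_X(\mathcal B_\alpha))$.
   Context: $\mathcal C_X$ is the Cartier operator on $H^0(X,\Omega^1_X)$: the $p^{-1}$-semilinear map with $\mathcal C_X(f^p\alpha+\beta)=f\,\mathcal C_X(\alpha)+\mathcal C_X(\beta)$, $\mathcal C_X(x^{p-1}dx)=dx$, $\mathcal C_X(x^ndx)=0$ for $n\not\equiv-1\pmod p$. For an Artin–Schreier curve $y^p-y=f$ with $f\in k[x]$ of degree $D$ prime to $p$, the set $$\mathcal B_X=\left\{y^ix^jdx:\ 0\le i\le p-2,\ 0\le j\le \left\lceil\tfrac{(p-i-1)D}{p}\right\rceil-2\right\}$$ is a $k$-basis of $H^0(X,\Omega^1_X)$. Order $\mathcal B_X$ lexicographically with $y>x$: $y^ix^jdx>y^ax^bdx$ iff $i>a$, or $i=a$ and $j>b$. For $\alpha\in\mathcal B_X$, $\mathcal B_\alpha=\{\beta\in\mathcal B_X:\beta<\alpha\}$, and for a set $A$ of differentials, $\operatorname{Span}(\mathcal C_X(A))$ is the $k$-span of $\{\mathcal C_X(a):a\in A\}$. *)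

From HB Require Import structures.
From mathcomp Require Import all_boot all_order all_algebra.
Set Implicit Arguments. Unset Strict Implicit. Unset Printing Implicit Defensive.
Import Order.TTheory GRing.Theory Num.Theory.
Local Open Scope ring_scope.

Section Cartier.
Variable k : closedFieldType.

Lemma exists_nth_root (n : nat) (c : k) : (0 < n)%N -> exists r : k, r ^+ n == c.
Proof.
move=> n0; have [r Hr] := @solve_monicpoly k n (fun i => if i == 0%N then c else 0) n0.
exists r; apply/eqP; rewrite Hr (bigD1 (Ordinal n0)) //= big1 ?addr0 ?expr0 ?mulr1 //.
by move=> [[|i] Hi] //=; rewrite mul0r.
Qed.

(* A chosen p-th root; in characteristic p it is the unique one (Frobenius is injective). *)
Definition proot (p : nat) (c : k) : k :=
  match p as q return ((0 < q)%N -> exists r : k, r ^+ q == c) -> k with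
  | 0 => fun _ => c
  | q.+1 => fun H => xchoose (H (ltn0Sn q))
  end (@exists_nth_root p c).

(* Cartier operator on polynomial differentials h(x) dx (p^{-1}-semilinear):
   C(x^(pm+p-1) dx) = x^m dx, C(x^n dx) = 0 for n <> -1 mod p.
   Returns the polynomial g with C(h dx) = g dx. *)
Definition cartier_x (p : nat) (h : {poly k}) : {poly k} :=
  \poly_(m < size h) proot p (h`_(p * m + p.-1)).

(* A differential g(x,y) dx with
   g in k[x,y] of y-degree < p is represented by g : {poly {poly k}}
   (outer variable = y, coefficients in k[x]); k[x,y]/(y^p-y-f) is free over
   k[x] with basis 1,y,...,y^(p-1), so this representation is faithful.
   Cartier operator: using y = y^p - f, y^i = sum_a C(i,a) (y^a)^p (-f)^(i-a), so
   C(y^i g_i(x) dx) = sum_a C(i,a) y^a C((-f)^(i-a) g_i dx). *)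
Definition cartier_AS (p : nat) (f : {poly k}) (g : {poly {poly k}}) : {poly {poly k}} :=
  \sum_(i < size g) \sum_(a < i.+1)
     ('C(i, a))%:R *: ((cartier_x p ((- f) ^+ (i - a) * g`_i))%:P * 'X^a).

Definition mono (i j : nat) : {poly {poly k}} := 'X^i * ('X^j)%:P.

End Cartier.

(* The index set of the basis B_X: y^i x^j dx with 0 <= i <= p-2 and
   0 <= j <= ceil((p-i-1)D/p) - 2. *)
Definition in_basis (p D i j : nat) : bool :=
  (i <= p - 2)%N && (j + 2 <= ((p - i - 1) * D + p - 1) %/ p)%N.

(* lexicographic order with y > x: y^a x^b dx < y^i x^j dx *)
Definition lex_lt (a b i j : nat) : bool := (a < i)%N || ((a == i) && (b < j)%N).

(* Write p = 2w+1, so that D = 4w^2+4w+2 and e := D/2 + p = 2w^2+4w+2.  Since y = y^p + f,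
   the coefficient of y^(m-s) x^d dx in C(y^m x^n dx) is binom(m, m-s) times the p-th root of
   the coefficient of x^(pd+p-1) in (x^D + x^e)^s x^n, whose exponents are (s-i)D + ie + n for
   0 <= i <= s.  As D = 1 and e = w+1 mod p, some s <= w and i0 in {0,1} make the exponent
   (s-i0)D + i0 e + n congruent to -1 mod p; it is reached by i0 alone, so this coefficient of
   C(y^m x^n dx) is nonzero.  It vanishes for every lexicographically smaller basis differential
   y^a x^b dx: if a < m, the degree bound defining B_X keeps all exponents below the target; if
   a = m and b < n, a match forces i = 0, i0 = 1 and n = b + (D - e), impossible since i0 = 1 is
   only chosen when n < 2w^2 = D - e. *)

From HB Require Import structures.
From mathcomp Require Import all_boot all_order all_algebra.
From mathcomp Require Import zify ring.
Set Implicit Arguments.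
Unset Strict Implicit.
Unset Printing Implicit Defensive.

Import GRing.Theory.
Local Open Scope ring_scope.

Section CartierCoefficients.
Variable k : closedFieldType.
Implicit Types (p : nat) (c : k) (h : {poly k}).

Lemma proot_expn p c : (0 < p)%N -> proot p c ^+ p = c.
Proof. by case: p => // q _; apply/eqP/(xchooseP (exists_nth_root c (ltn0Sn q))). Qed.

Lemma proot_eq0 p c : (0 < p)%N -> (proot p c == 0) = (c == 0).
Proof. by move=> p_gt0; rewrite -{2}(proot_expn c p_gt0) expf_eq0 p_gt0. Qed.

Lemma proot0 p : (0 < p)%N -> proot p 0 = 0 :> k.
Proof. by move=> p_gt0; apply/eqP; rewrite proot_eq0. Qed.

Lemma cartier_x0 p : cartier_x p 0 = 0 :> {poly k}.
Proof. by rewrite /cartier_x size_poly0 poly_def big_ord0. Qed.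

Lemma coef_cartier_x p h d : (0 < p)%N ->
  (cartier_x p h)`_d = proot p h`_(p * d + p.-1).
Proof.
move=> p_gt0; rewrite coef_poly; case: ltnP => // size_le.
rewrite nth_default ?proot0 //; apply: leq_trans size_le _.
by case: p p_gt0 => // q _; rewrite mulSn -addnA leq_addr.
Qed.

Lemma coef_mono a b i : (mono k a b)`_i = (i == a)%:R * 'X^b.
Proof. by rewrite coefMC coefXn. Qed.

Lemma size_mono a b : size (mono k a b) = a.+1.
Proof.
by rewrite /mono mulrC mul_polyC size_scale ?size_polyXn // monic_neq0 ?monicXn.
Qed.

Lemma cartier_AS_mono p f a b :
  cartier_AS p f (mono k a b) =
  \poly_(j < a.+1) ('C(a, j)%:R *: cartier_x p ((- f) ^+ (a - j) * 'X^b)).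
Proof.
rewrite /cartier_AS size_mono big_ord_recr /= big1 ?add0r => [|i _].
  rewrite poly_def; apply: eq_bigr => j _.
  by rewrite coef_mono eqxx mul1r mul_polyC scalerA mulr_natl scaler_nat.
rewrite big1 // => j _.
by rewrite coef_mono (ltn_eqF (ltn_ord i)) !(mul0r, mulr0) cartier_x0 mul0r scaler0.
Qed.

Lemma coef_cartier_AS_mono p f a b A d : (0 < p)%N ->
  ((cartier_AS p f (mono k a b))`_A)`_d =
  if (A <= a)%N then proot p (((- f) ^+ (a - A) * 'X^b)`_(p * d + p.-1)) *+ 'C(a, A)
  else 0.
Proof.
move=> p_gt0; rewrite cartier_AS_mono coef_poly ltnS; case: leqP => _.
  by rewrite coefZ coef_cartier_x // mulr_natl.
exact: coef0.
Qed.

End CartierCoefficients.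

Section BinomialCoefficients.
Variable R : comNzRingType.

Lemma coef_binomial_mulXn (D e s b E : nat) :
  (('X^D + 'X^e : {poly R}) ^+ s * 'X^b)`_E =
  \sum_(i < s.+1) (E == (s - i) * D + i * e + b)%N%:R *+ 'C(s, i).
Proof.
rewrite exprDn mulr_suml coef_sum; apply: eq_bigr => i _.
by rewrite mulrnAl coefMn -!exprM -!exprD coefXn (mulnC D) (mulnC e).
Qed.

Lemma coef_binomial_mulXn_eq0 (D e s b E : nat) :
  (forall i, (i <= s)%N -> ((s - i) * D + i * e + b)%N <> E) ->
  (('X^D + 'X^e : {poly R}) ^+ s * 'X^b)`_E = 0.
Proof.
move=> missE; rewrite coef_binomial_mulXn big1 // => i _.
case: eqP => [hitE | _]; last by rewrite mul0rn.
by case: (missE i); rewrite // -ltnS.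
Qed.

Lemma coef_binomial_mulXn_unique (D e s b E i0 : nat) : (i0 <= s)%N ->
  E = ((s - i0) * D + i0 * e + b)%N ->
  (forall i, (i <= s)%N -> ((s - i) * D + i * e + b)%N = E -> i = i0) ->
  (('X^D + 'X^e : {poly R}) ^+ s * 'X^b)`_E = 'C(s, i0)%:R.
Proof.
move=> i0_le hitE onlyE; have i0_lt : (i0 < s.+1)%N by [].
rewrite coef_binomial_mulXn (bigD1 (Ordinal i0_lt)) //=.
rewrite -hitE eqxx big1 ?addr0 // => i /eqP neq_i.
case: eqP => [hitE' | _]; last by rewrite mul0rn.
by case: neq_i; apply/val_inj/(onlyE i); rewrite // -ltnS.
Qed.

Lemma binomial_pchar_neq0 (p s i : nat) : prime p -> p \in [pchar R] ->
  (s < p)%N -> (i <= s)%N -> 'C(s, i)%:R != 0 :> R.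
Proof.
move=> p_pr pcharRp s_lt i_le; rewrite -(dvdn_pcharf pcharRp).
have fact_ndvd t : (t < p)%N -> ~~ (p %| t`!)%N.
  elim: t => [|t IHt] t_lt; first by rewrite dvdn1 gtn_eqF ?prime_gt1.
  by rewrite factS Euclid_dvdM // negb_or IHt ?(ltnW t_lt) // gtnNdvd.
by apply: contra (fact_ndvd s s_lt); rewrite -(bin_fact i_le); apply: dvdn_mulr.
Qed.

Lemma coef2_sum_weighted_eq0 (N M A d : nat) (P : nat -> nat -> bool)
    (c : nat -> nat -> R) (G : nat -> nat -> {poly {poly R}}) :
  (forall a b, P a b -> ((G a b)`_A)`_d = 0) ->
  ((\sum_(a < N) \sum_(b < M) ((if P a b then c a b else 0)%:P)%:P * G a b)`_A)`_d = 0.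
Proof.
move=> G_eq0; rewrite !coef_sum big1 // => a _; rewrite !coef_sum big1 // => b _.
by rewrite !coefCM; case: ifP => [/G_eq0 -> | _]; rewrite ?mulr0 ?mul0r.
Qed.

End BinomialCoefficients.

Lemma in_basisE p D a b : (0 < p)%N ->
  in_basis p D a b = (a <= p - 2)%N && ((b + 2) * p <= (p - a - 1) * D + p.-1)%N.
Proof. by move=> p_gt0; rewrite /in_basis leq_divRL // -subn1 addnBA. Qed.

Section Exponents.
Local Open Scope nat_scope.
Variables D e : nat.
Hypothesis e_lt_D : e < D.
Implicit Types s i j : nat.

Lemma exponent_ltn {s i j} : i < j -> j <= s ->
  (s - j) * D + j * e < (s - i) * D + i * e.
Proof. move=> i_lt j_le; nia. Qed.

Lemma exponent_inj s i j : i <= s -> j <= s ->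
  (s - i) * D + i * e = (s - j) * D + j * e -> i = j.
Proof.
move=> i_le j_le E; case: (ltngtP i j) => // [i_lt | j_lt].
  by have := exponent_ltn i_lt j_le; rewrite E ltnn.
by have := exponent_ltn j_lt i_le; rewrite E ltnn.
Qed.

Lemma exponent_same_row_neq s i i0 b n : i <= s -> i0 <= 1 -> i0 <= s ->
  (i0 = 1 -> n + e < D) -> b < n ->
  (s - i) * D + i * e + b <> (s - i0) * D + i0 * e + n.
Proof.
move=> i_le i0_le1 i0_le n_small b_lt.
case: (leqP i0 i) => [i0_le_i | i_lt_i0].
  suff : (s - i) * D + i * e <= (s - i0) * D + i0 * e by lia.
  case: (ltngtP i0 i) i0_le_i => // [i0_lt_i _ | <- _]; last by [].
  exact/ltnW/exponent_ltn.
have [-> i0E] : i = 0 /\ i0 = 1 by lia.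
move: (n_small i0E); rewrite i0E; nia.
Qed.

Lemma exponent_lower_row_ltn s s' i i0 b n : s' < s -> i <= s' -> i0 <= 1 ->
  b < (s - s'.+1) * D + e ->
  (s' - i) * D + i * e + b < (s - i0) * D + i0 * e + n.
Proof. move=> s'_lt i_le i0_le1 b_lt; nia. Qed.

End Exponents.

Section ArtinSchreierExponents.
Local Open Scope nat_scope.
Variable w : nat.
Hypothesis w_gt0 : 0 < w.
Local Notation p := (2 * w + 1).
Local Notation D := (4 * w * w + 4 * w + 2).
Local Notation e := (2 * w * w + 4 * w + 2).

Lemma in_basis_bound a b : in_basis p D a b -> (b + 2) * p <= (p - a - 1) * D + 2 * w.
Proof. by rewrite in_basisE ?addn1 // => /andP[_]. Qed.

Lemma in_basis_row_bound m n : w <= m -> in_basis p D m n -> n + 1 <= w * p.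
Proof.
move=> w_le /in_basis_bound n_bound.
have {}n_bound : (n + 2) * p <= w * D + 2 * w.
  by apply: leq_trans n_bound _; rewrite leq_add2r leq_mul2r; apply/orP; right; lia.
nia.
Qed.

Lemma basis_col_bound b k : (b + 2) * p <= (w + 1 + k) * D + 2 * w -> b < k * D + e.
Proof. move=> b_bound; nia. Qed.

Lemma target_exponent_exists n : n + 1 <= w * p ->
  exists s i0 d, [/\ s <= w, i0 <= 1, i0 <= s, i0 = 1 -> n < 2 * w * w
    & (s - i0) * D + i0 * e + n = p * d + 2 * w].
Proof.
move=> n_le; have p_gt0 : 0 < p by lia.
have := divn_eq (n + 1) p; have := ltn_pmod (n + 1) p_gt0.
set q := (n + 1) %/ p; set u := (n + 1) %% p; clearbody q u => u_lt n1E.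
have [u0 | u_gt0] := posnP u.
  case: q n1E => [|q] n1E; first by lia.
  by exists 0, 0, q; split=> //; nia.
have nE : n = q * p + u.-1 by lia.
have [u_le | u_gt] := leqP u w.
  have q_lt : q < w by nia.
  have [v wE] : exists v, w = u + v by exists (w - u); lia.
  exists v.+1, 1, (q + v * p + w + 1); split=> //; [lia | nia | ].
  rewrite nE subn1 /= wE; case: (u) u_gt0 => // u' _ /=; ring.
have [s sE] : exists s, s + u = p by exists (p - u); lia.
exists s, 0, (q + s * p); split=> //; first by lia.
rewrite nE subn0 mul0n addn0; case: (u) sE u_gt0 => // u' sE _ /=.
by rewrite -[X in _ = _ + X](_ : s + u' = 2 * w); [ring | lia].
Qed.

Lemma target_exponent_avoids_lower m n s i0 a b j :
  w <= m -> s <= m -> i0 <= 1 -> i0 <= s -> (i0 = 1 -> n < 2 * w * w) ->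
  in_basis p D a b -> lex_lt a b m n -> m - s <= a -> j <= a - (m - s) ->
  (a - (m - s) - j) * D + j * e + b <> (s - i0) * D + i0 * e + n.
Proof.
move=> w_le s_le i0_le1 i0_le n_small /in_basis_bound b_bound.
have e_lt_D : e < D by lia.
case/orP=> [a_lt | /andP[/eqP aE b_lt]] a_ge j_le.
  have s'_lt : a - (m - s) < s by lia.
  suff b_lt : b < (s - (a - (m - s)).+1) * D + e.
    by have := exponent_lower_row_ltn e_lt_D n s'_lt j_le i0_le1 b_lt; lia.
  apply: basis_col_bound; apply: leq_trans b_bound _.
  by rewrite leq_add2r leq_mul2r; apply/orP; right; lia.
rewrite aE subKn // in j_le *.
have n_e_lt : i0 = 1 -> n + e < D by move/n_small; lia.
exact: (exponent_same_row_neq e_lt_D j_le i0_le1 i0_le n_e_lt b_lt).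
Qed.

End ArtinSchreierExponents.

Section ArtinSchreierCurve.
Variables (k : closedFieldType) (w p D e : nat).
Hypotheses (w_gt0 : (0 < w)%N) (pE : p = (2 * w + 1)%N).
Hypotheses (DE : D = (4 * w * w + 4 * w + 2)%N) (eE : e = (2 * w * w + 4 * w + 2)%N).
Local Notation f := (- 'X^D - 'X^e : {poly k}).

Let p_gt0 : (0 < p)%N. Proof. by rewrite pE addn1. Qed.
Let oppfE : - f = 'X^D + 'X^e. Proof. by rewrite opprD !opprK. Qed.

Section TargetCoefficient.
Variables m n s i0 d : nat.
Hypotheses (w_le_m : (w <= m)%N) (s_le_w : (s <= w)%N) (i0_le1 : (i0 <= 1)%N).
Hypotheses (i0_le_s : (i0 <= s)%N) (n_small : i0 = 1%N -> (n < 2 * w * w)%N).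
Hypothesis target : (p * d + p.-1 = (s - i0) * D + i0 * e + n)%N.

Let s_le_m : (s <= m)%N. Proof. exact: leq_trans s_le_w w_le_m. Qed.

Lemma cartier_AS_lower_coef_eq0 a b : in_basis p D a b && lex_lt a b m n ->
  ((cartier_AS p f (mono k a b))`_(m - s))`_d = 0.
Proof.
case/andP=> ab_basis ab_lt; rewrite coef_cartier_AS_mono //; case: leqP => // ms_le_a.
rewrite oppfE coef_binomial_mulXn_eq0 ?proot0 ?mul0rn // => j j_le.
move: ab_basis; rewrite target pE DE eE => ab_basis.
exact: (target_exponent_avoids_lower w_gt0 w_le_m s_le_m i0_le1 i0_le_s n_small
  ab_basis ab_lt ms_le_a j_le).
Qed.

Lemma cartier_AS_target_coef_neq0 : prime p -> p \in [pchar k] -> in_basis p D m n ->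
  ((cartier_AS p f (mono k m n))`_(m - s))`_d != 0.
Proof.
move=> p_pr pcharkp mn_basis.
rewrite coef_cartier_AS_mono // leq_subr subKn // oppfE.
rewrite (coef_binomial_mulXn_unique _ i0_le_s target) => [|i i_le]; last first.
  by rewrite target => /eqP; rewrite eqn_add2r => /eqP /exponent_inj; apply; lia.
have m_lt_p : (m < p)%N by move: mn_basis; rewrite in_basisE // => /andP[]; lia.
rewrite -[_ *+ 'C(m, _)]mulr_natr mulf_neq0 ?proot_eq0 //.
  by rewrite (binomial_pchar_neq0 p_pr pcharkp) //; lia.
by rewrite (binomial_pchar_neq0 p_pr pcharkp) ?leq_subr.
Qed.

End TargetCoefficient.

Lemma cartier_AS_separating_coef m n : prime p -> p \in [pchar k] ->
  in_basis p D m n -> (w <= m)%N ->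
  exists A d, ((cartier_AS p f (mono k m n))`_A)`_d != 0 /\
    forall a b, in_basis p D a b && lex_lt a b m n ->
      ((cartier_AS p f (mono k a b))`_A)`_d = 0.
Proof.
move=> p_pr pcharkp mn_basis w_le_m.
have n_le : (n + 1 <= w * (2 * w + 1))%N.
  by apply: (in_basis_row_bound w_gt0 w_le_m); rewrite -pE -DE.
have [s [i0 [d [s_le i0_le1 i0_le n_small targetE]]]] := target_exponent_exists w_gt0 n_le.
have target : (p * d + p.-1 = (s - i0) * D + i0 * e + n)%N.
  by rewrite DE eE pE targetE addn1.
exists (m - s)%N, d; split.
  exact: cartier_AS_target_coef_neq0 w_le_m s_le i0_le1 i0_le n_small target
    p_pr pcharkp mn_basis.
exact: cartier_AS_lower_coef_eq0 w_le_m s_le i0_le1 i0_le n_small target.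
Qed.

End ArtinSchreierCurve.

Theorem mainTheorem6 (p : nat) (k : closedFieldType) :
  prime p -> odd p -> p \in [pchar k] ->
  let D := (p ^ 2).+1 in
  let f : {poly k} := - 'X^D - 'X^(D./2 + p) in
  forall m n : nat, in_basis p D m n -> (p - 1 <= 2 * m)%N ->
  ~ exists c : nat -> nat -> k,
      cartier_AS p f (mono k m n) =
      \sum_(a < p) \sum_(b < D)
        ((if in_basis p D a b && lex_lt a b m n then c a b else 0)%:P)%:P *
          cartier_AS p f (mono k a b).
Proof.
move=> p_pr p_odd pcharkp D f m n mn_basis m_ge [c Cc].
have [w pE] : exists w, p = (2 * w + 1)%N.
  by exists p./2; have := odd_double_half p; rewrite p_odd; lia.
have w_gt0 : (0 < w)%N by have := prime_gt1 p_pr; lia.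
have DE : D = (4 * w * w + 4 * w + 2)%N by rewrite /D pE; lia.
have eE : (D./2 + p = 2 * w * w + 4 * w + 2)%N by rewrite DE pE; lia.
have w_le_m : (w <= m)%N by lia.
have [A [d [target_neq0 lower_eq0]]] :=
  cartier_AS_separating_coef w_gt0 pE DE eE p_pr pcharkp mn_basis w_le_m.
by move/eqP: target_neq0; apply; rewrite Cc (coef2_sum_weighted_eq0 p D c lower_eq0).
Qed.
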